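(* Let $c_r>0$ and $c_e>0$ be constants and let $\mu$ be a finite (nonnegative) measure on $\mathbb{R}$, where for a set $S$ of attribute values $\mu(S)$ is the (estimated) number of tuples whose value of a fixed indexed attribute $a$ lies in $S$. Consider two range conditions (candidate guards) on $a$, namely $o_x: a\in[v^x_1,v^x_2]$ and $o_y: a\in[v^y_1,v^y_2]$, coming from two different policies $P_x$ and $P_y$. Let $o_{x\oplus y}: a\in[\min(v^x_1,v^y_1),\max(v^x_2,v^y_2)]$ be their merge. Define the costs $\mathrm{cost}(P_x)=\mu([v^x_1,v^x_2])\,(c_r+c_e)$, $\mathrm{cost}(P_y)=\mu([v^y_1,v^y_2])\,(c_r+c_e)$, and $\mathrm{cost}(P_x\oplus P_y)=\mu([\min(v^x_1,v^y_1),\max(v^x_2,v^y_2)])\,(c_r+2c_e)$, and say that merging $o_x$ and $o_y$ is beneficial if $\mathrm{cost}(P_x\oplus P_y)<\mathrm{cost}(P_x)+\mathrm{cost}(P_y)$. If $[v^x_1,v^x_2]\cap[v^y_1,v^y_2]=\emptyset$, then merging $o_x$ and $o_y$ is not beneficial.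
   Context: Setting: access-control policies over a database relation are evaluated via guarded expressions. A guarded expression consists of a guard (a simple condition on an indexed attribute) together with a set (partition) of policies; its cost is modeled as $\mathrm{Card}(\text{guard})\cdot(c_r + |\text{partition}|\cdot c_e)$, where $\mathrm{Card}$ is the estimated number of tuples satisfying the guard, $c_r$ is the cost of reading one tuple and $c_e$ the cost of evaluating one policy's conditions on one tuple. A guarded expression containing a single policy $P_l$ with guard $o$ thus costs $\mathrm{Card}(o)(c_r+c_e)$, and a merged guard covering two policies costs $\mathrm{Card}(\text{merged guard})(c_r+2c_e)$. Here $\mathrm{Card}$ is modeled by the measure $\mu$. *)

From HB Require Import structures.
From mathcomp Require Import all_boot all_order all_algebra.
From mathcomp Require Import all_classical all_reals all_analysis.
Set Implicit Arguments. Unset Strict Implicit. Unset Printing Implicit Defensive.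
Import Order.TTheory GRing.Theory Num.Theory.
Local Open Scope classical_set_scope.
Local Open Scope ring_scope.
Local Open Scope ereal_scope.

Definition card_range (R : realType) (mu : set R -> \bar R) (v1 v2 : R) : \bar R :=
  mu `[v1, v2]%classic.

Definition cost_single (R : realType) (mu : set R -> \bar R) (cr ce : R) (v1 v2 : R) : \bar R :=
  card_range mu v1 v2 * (cr + ce)%:E.

Definition cost_merged (R : realType) (mu : set R -> \bar R) (cr ce : R)
  (v1x v2x v1y v2y : R) : \bar R :=
  card_range mu (Order.min v1x v1y) (Order.max v2x v2y) * (cr + 2 * ce)%:E.

Definition merge_beneficial (R : realType) (mu : set R -> \bar R) (cr ce : R)
  (v1x v2x v1y v2y : R) : Prop :=
  cost_merged mu cr ce v1x v2x v1y v2y < cost_single mu cr ce v1x v2x + cost_single mu cr ce v1y v2y.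

(* The two ranges are disjoint and both lie in the merged range, so the merged
   guard selects at least as many tuples as the two guards together, and it
   pays the larger per-tuple cost c_r + 2 c_e on each of them. *)
From HB Require Import structures.
From mathcomp Require Import all_boot all_order all_algebra.
From mathcomp Require Import all_classical all_reals all_analysis.
Import Order.TTheory GRing.Theory Num.Theory.
Local Open Scope classical_set_scope.
Local Open Scope ring_scope.

Lemma itvU_sub_itv_hull {d : Order.disp_t} {T : orderType d} (a b c e : T) :
  `[a, b] `|` `[c, e] `<=` `[Order.min a c, Order.max b e].
Proof.
move=> z; rewrite /= !in_itv /= ge_min le_max.
by case=> /andP[-> ->]; rewrite ?orbT.
Qed.

Lemma measureU_le_sub {d : measure_display} {T : measurableType d}
    {R : realType} (mu : {measure set T -> \bar R}) {A B C : set T} :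
  measurable A -> measurable B -> measurable C ->
  A `&` B = set0 -> A `|` B `<=` C -> (mu A + mu B <= mu C)%E.
Proof.
move=> mA mB mC AB0 ABC.
by rewrite -measureU //; apply: le_measure => //; rewrite inE //; exact: measurableU.
Qed.

Theorem theorem1 (R : realType) (mu : {finite_measure set R -> \bar R})
  (cr ce : R) (hcr : 0 < cr) (hce : 0 < ce) (v1x v2x v1y v2y : R) :
  `[v1x, v2x] `&` `[v1y, v2y] = set0 ->
  ~ merge_beneficial mu cr ce v1x v2x v1y v2y.
Proof.
move=> disj; apply/negP; rewrite -leNgt /cost_merged /cost_single /card_range.
have le_sum_hull := measureU_le_sub mu (measurable_itv _) (measurable_itv _)
  (measurable_itv _) disj (itvU_sub_itv_hull v1x v2x v1y v2y).
rewrite -ge0_muleDl //.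
apply: (le_trans (lee_wpmul2r _ le_sum_hull)); first by rewrite lee_fin ltW // addr_gt0.
by apply: lee_wpmul2l => //; rewrite lee_fin lerD2l ler_peMl ?ler1n // ltW.
Qed.
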